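(* Every label of the shape $-\mid open\ n.T_1$ (with $n$ an ambient name and $T_1$ a pure process) of the mobile-ambient transition system $M_I$ is stable under $\sim^{BS}_M$: whenever $P\sim^{BS}_M Q$ and $P\xrightarrow{-|open\ n.T_1}_{M_I}P'$, there is $Q'$ with $Q\xrightarrow{-|open\ n.T_1}_{M_I}Q'$ and $P'\sim^{BS}_M Q'$.
   Context: Mobile ambients (finite, communication-free fragment). Pure processes $P::=\mathbf{0}\mid n[P]\mid M.P\mid(\nu n)P\mid P_1|P_2$, $M::=in\ n\mid out\ n\mid open\ n$. Structural congruence $\equiv$: least congruence with $|$ commutative, associative, unit $\mathbf{0}$; $(\nu n)(\nu m)P\equiv(\nu m)(\nu n)P$; $(\nu n)(P|Q)\equiv P|(\nu n)Q$ if $n\notin fn(P)$; $(\nu n)m[P]\equiv m[(\nu n)P]$ if $n\ne m$; $(\nu n)M.P\equiv M.(\nu n)P$ if $n\notin fn(M)$; $\alpha$-conversion. Reduction $\rightsquigarrow$: least relation closed under $\equiv$, $(\nu n)-$, $n[-]$, $-|R$, generated by $n[in\ m.P|Q]|m[R]\rightsquigarrow m[n[P|Q]|R]$, $m[n[out\ m.P|Q]|R]\rightsquigarrow n[P|Q]|m[R]$, $open\ n.P|n[Q]\rightsquigarrow P|Q$. Barb $P\downarrow_n$ iff $P\equiv(\nu A)(n[Q]|R)$ with $n\notin A$. Barbed saturated bisimilarity $\sim^{BS}_M$ is the largest symmetric relation $\mathcal{R}$ on pure processes such that if $P\,\mathcal{R}\,Q$ then for every (pure, unary) context $C[-]$ and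 name $n$: $C[P]\downarrow_n$ implies $C[Q]\downarrow_n$, and $C[P]\rightsquigarrow P'$ implies $C[Q]\rightsquigarrow Q'$ for some $Q'$ with $P'\,\mathcal{R}\,Q'$. In $M_I$, $P\xrightarrow{-|open\ n.T_1}_{M_I}P'$ holds iff $P\equiv(\nu A)(n[P_1]|P_2)$ with $n\notin A$ and $P'\equiv(\nu A)(P_1|T_1|P_2)$ (with $A$ $\alpha$-converted to avoid capturing free names of $T_1$); this is the instantiation of the rule (CoOpen) $P\xrightarrow{-|open\ n.X_1}(\nu A)(P_1|X_1|P_2)$ by substituting $T_1$ for the process variable $X_1$. *)

(* Finite, communication-free pure mobile ambients. *)
From Stdlib Require Import List Arith.
Import ListNotations.

Definition name := nat.

Inductive cap : Type :=
| CIn : name -> cap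
| COut : name -> cap
| COpen : name -> cap.

Inductive proc : Type :=
| PNil : proc
| PAmb : name -> proc -> proc
| PAct : cap -> proc -> proc
| PRes : name -> proc -> proc
| PPar : proc -> proc -> proc.

Definition fn_cap (M : cap) : list name :=
  match M with CIn n | COut n | COpen n => [n] end.

Fixpoint fn (P : proc) : list name :=
  match P with
  | PNil => []
  | PAmb n P => n :: fn P
  | PAct M P => fn_cap M ++ fn P
  | PRes n P => remove Nat.eq_dec n (fn P)
  | PPar P Q => fn P ++ fn Q
  end.

(* name swapping (used for alpha-conversion, nominal style) *)
Definition swap_name (a b x : name) : name :=
  if Nat.eqb x a then b else if Nat.eqb x b then a else x.

Definition swap_cap (a b : name) (M : cap) : cap :=
  match M with
  | CIn n => CIn (swap_name a b n)
  | COut n => COut (swap_name a b n)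
  | COpen n => COpen (swap_name a b n)
  end.

Fixpoint swap (a b : name) (P : proc) : proc :=
  match P with
  | PNil => PNil
  | PAmb n P => PAmb (swap_name a b n) (swap a b P)
  | PAct M P => PAct (swap_cap a b M) (swap a b P)
  | PRes n P => PRes (swap_name a b n) (swap a b P)
  | PPar P Q => PPar (swap a b P) (swap a b Q)
  end.

Fixpoint nus (A : list name) (P : proc) : proc :=
  match A with
  | [] => P
  | n :: A' => PRes n (nus A' P)
  end.

Inductive scong : proc -> proc -> Prop :=
| sc_refl P : scong P P
| sc_sym P Q : scong P Q -> scong Q P
| sc_trans P Q R : scong P Q -> scong Q R -> scong P R
| sc_amb n P Q : scong P Q -> scong (PAmb n P) (PAmb n Q)
| sc_act M P Q : scong P Q -> scong (PAct M P) (PAct M Q)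
| sc_res n P Q : scong P Q -> scong (PRes n P) (PRes n Q)
| sc_parl P Q R : scong P Q -> scong (PPar P R) (PPar Q R)
| sc_parr P Q R : scong P Q -> scong (PPar R P) (PPar R Q)
| sc_par_comm P Q : scong (PPar P Q) (PPar Q P)
| sc_par_assoc P Q R : scong (PPar (PPar P Q) R) (PPar P (PPar Q R))
| sc_par_nil P : scong (PPar P PNil) P
| sc_res_res n m P : scong (PRes n (PRes m P)) (PRes m (PRes n P))
| sc_res_par n P Q : ~ In n (fn P) -> scong (PRes n (PPar P Q)) (PPar P (PRes n Q))
| sc_res_amb n m P : n <> m -> scong (PRes n (PAmb m P)) (PAmb m (PRes n P))
| sc_res_act n M P : ~ In n (fn_cap M) -> scong (PRes n (PAct M P)) (PAct M (PRes n P))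
| sc_alpha n m P : ~ In m (fn P) -> scong (PRes n P) (PRes m (swap n m P)).

Inductive red : proc -> proc -> Prop :=
| r_in n m P Q R :
    red (PPar (PAmb n (PPar (PAct (CIn m) P) Q)) (PAmb m R))
        (PAmb m (PPar (PAmb n (PPar P Q)) R))
| r_out n m P Q R :
    red (PAmb m (PPar (PAmb n (PPar (PAct (COut m) P) Q)) R))
        (PPar (PAmb n (PPar P Q)) (PAmb m R))
| r_open n P Q :
    red (PPar (PAct (COpen n) P) (PAmb n Q)) (PPar P Q)
| r_res n P P' : red P P' -> red (PRes n P) (PRes n P')
| r_amb n P P' : red P P' -> red (PAmb n P) (PAmb n P')
| r_par P P' R : red P P' -> red (PPar P R) (PPar P' R)
| r_scong P P' Q Q' : scong P P' -> red P' Q' -> scong Q' Q -> red P Q.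

Definition barb (P : proc) (n : name) : Prop :=
  exists A Q R, scong P (nus A (PPar (PAmb n Q) R)) /\ ~ In n A.

Inductive ctx : Type :=
| CHole : ctx
| CAmb : name -> ctx -> ctx
| CAct : cap -> ctx -> ctx
| CRes : name -> ctx -> ctx
| CParL : ctx -> proc -> ctx
| CParR : proc -> ctx -> ctx.

Fixpoint fill (C : ctx) (P : proc) : proc :=
  match C with
  | CHole => P
  | CAmb n C => PAmb n (fill C P)
  | CAct M C => PAct M (fill C P)
  | CRes n C => PRes n (fill C P)
  | CParL C Q => PPar (fill C P) Q
  | CParR Q C => PPar Q (fill C P)
  end.

Definition bs_bisimulation (Rel : proc -> proc -> Prop) : Prop :=
  (forall P Q, Rel P Q -> Rel Q P) /\
  (forall P Q, Rel P Q ->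
     (forall C n, barb (fill C P) n -> barb (fill C Q) n) /\
     (forall C P', red (fill C P) P' ->
        exists Q', red (fill C Q) Q' /\ Rel P' Q')).

Definition bs_bisim (P Q : proc) : Prop :=
  exists Rel, bs_bisimulation Rel /\ Rel P Q.

(* The M_I transition with label  - | open n.T1  (rule CoOpen instantiated) *)
Definition trans_coopen (P : proc) (n : name) (T1 : proc) (P' : proc) : Prop :=
  exists A P1 P2,
    scong P (nus A (PPar (PAmb n P1) P2)) /\
    ~ In n A /\
    (forall a, In a A -> ~ In a (fn T1)) /\
    scong P' (nus A (PPar (PPar P1 T1) P2)).

(* Let k be fresh. Since P ≡ (νA)(n[P1] | P2), the context [- | open n.k[]] lets P
   reduce to (νA)(P1 | k[] | P2), which exhibits the barb k. Q must match this by a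
   reduction of Q | open n.k[] exhibiting k; as k occurs there only under the prefix
   open n, that reduction can only be the prefix dissolving an ambient n[V] of Q, so
   Q ≡ (νA')(n[V] | W) and the reduct is ≡ (νA')(V | k[] | W). The context
   [- | open k.T1] then takes the P-side to (νA)(P1 | T1 | P2) ≡ P', losing the barb k;
   the Q-side can only lose it by opening its unique, inert k[], which yields
   (νA')(V | T1 | W), the required Q'.
   Both reduction analyses are carried out modulo ≡ through invariants of ≡: the
   occurrence counts of k, the unguarded ambient names, and the functions [opener],
   [fire_opener] and [dissolve] that compute the effect of the relevant step. *)

From Stdlib Require Import List Arith Lia.
Import ListNotations.

Lemma in_remove_iff (x y : name) l : In x (remove Nat.eq_dec y l) <-> In x l /\ x <> y.
Proof. split; [apply in_remove | intros [H1 H2]; apply in_in_remove; auto]. Qed.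

Lemma swap_name_involutive a b x : swap_name a b (swap_name a b x) = x.
Proof.
  unfold swap_name.
  destruct (Nat.eqb_spec x a) as [->|Ha].
  - rewrite Nat.eqb_refl. destruct (Nat.eqb_spec b a); subst; rewrite ?Nat.eqb_refl; auto.
  - destruct (Nat.eqb_spec x b) as [->|Hb].
    + rewrite Nat.eqb_refl. auto.
    + apply Nat.eqb_neq in Ha, Hb. now rewrite Ha, Hb.
Qed.

Lemma swap_name_inj a b x y : swap_name a b x = swap_name a b y -> x = y.
Proof.
  intro H. now rewrite <- (swap_name_involutive a b x), <- (swap_name_involutive a b y), H.
Qed.

Lemma swap_name_eq_iff a b x y : swap_name a b x = y <-> x = swap_name a b y.
Proof. split; intro H; subst; now rewrite swap_name_involutive. Qed.

Lemma swap_name_fresh a b x : x <> a -> x <> b -> swap_name a b x = x.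
Proof.
  unfold swap_name; intros.
  destruct (Nat.eqb_spec x a), (Nat.eqb_spec x b); congruence.
Qed.

Lemma swap_name_l a b : swap_name a b a = b.
Proof. unfold swap_name. now rewrite Nat.eqb_refl. Qed.

Lemma swap_name_r a b : swap_name a b b = a.
Proof. unfold swap_name. destruct (Nat.eqb_spec b a); subst; rewrite ?Nat.eqb_refl; auto. Qed.

Lemma swap_name_id a x : swap_name a a x = x.
Proof. unfold swap_name. destruct (Nat.eqb_spec x a); subst; auto. Qed.

Lemma swap_name_eqb a b x y : Nat.eqb (swap_name a b x) (swap_name a b y) = Nat.eqb x y.
Proof.
  destruct (Nat.eqb_spec x y) as [->|Hxy]; [apply Nat.eqb_refl|].
  apply Nat.eqb_neq. intro H. apply Hxy. eapply swap_name_inj; eauto.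
Qed.

Lemma swap_name_eqb_l a b x y : Nat.eqb (swap_name a b x) y = Nat.eqb x (swap_name a b y).
Proof. rewrite <- (swap_name_involutive a b y) at 1. apply swap_name_eqb. Qed.

Lemma in_map_swap_name a b A y : In y (map (swap_name a b) A) <-> In (swap_name a b y) A.
Proof.
  rewrite in_map_iff. split.
  - intros [z [<- Hz]]. now rewrite swap_name_involutive.
  - intro H. exists (swap_name a b y). now rewrite swap_name_involutive.
Qed.

Lemma rename_fresh_avoids n a A L : ~ In a L -> (forall y, In y A -> ~ In y (a :: L)) ->
  forall y, In y (a :: map (swap_name n a) A) -> ~ In y L.
Proof.
  intros HaL HAL y [<-|Hy]; auto.
  rewrite in_map_swap_name in Hy. apply HAL in Hy. simpl in Hy.
  unfold swap_name in Hy.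
  destruct (Nat.eqb_spec y n); [subst; tauto|].
  destruct (Nat.eqb_spec y a); [subst|]; tauto.
Qed.

Lemma fn_cap_swap a b M x : In x (fn_cap (swap_cap a b M)) <-> In (swap_name a b x) (fn_cap M).
Proof. destruct M; simpl; rewrite !swap_name_eq_iff; intuition. Qed.

Lemma in_remove_swap a b n l l' x (IH : In x l <-> In (swap_name a b x) l') :
  In x (remove Nat.eq_dec (swap_name a b n) l) <->
  In (swap_name a b x) (remove Nat.eq_dec n l').
Proof.
  rewrite !in_remove_iff, IH, swap_name_eq_iff. tauto.
Qed.

Lemma fn_swap a b P x : In x (fn (swap a b P)) <-> In (swap_name a b x) (fn P).
Proof.
  revert x; induction P; intro x; simpl.
  - tauto.
  - rewrite IHP, swap_name_eq_iff. tauto.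
  - rewrite !in_app_iff, IHP, fn_cap_swap. tauto.
  - now apply in_remove_swap.
  - rewrite !in_app_iff, IHP1, IHP2. tauto.
Qed.

Lemma swap_id a P : swap a a P = P.
Proof.
  induction P; simpl; rewrite ?IHP, ?IHP1, ?IHP2, ?swap_name_id; auto.
  destruct c; simpl; now rewrite swap_name_id.
Qed.

Lemma swap_nus a b A P : swap a b (nus A P) = nus (map (swap_name a b) A) (swap a b P).
Proof. induction A; simpl; congruence. Qed.

Lemma fn_nus A P x : In x (fn (nus A P)) <-> In x (fn P) /\ ~ In x A.
Proof. induction A; simpl; [tauto|]. rewrite in_remove_iff, IHA. intuition. Qed.

Lemma fn_scong P Q : scong P Q -> forall x, In x (fn P) <-> In x (fn Q).
Proof.
  induction 1; intro x; simpl in *; rewrite ?in_app_iff, ?in_remove_iff, ?in_app_iff in *;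
    try rewrite IHscong; try tauto.
  - rewrite IHscong1; auto.
  - simpl; tauto.
  - split; [intros [[A|A] B]|intros [A|[A B]]]; auto. split; auto. intros ->; tauto.
  - destruct (Nat.eq_dec n m); [congruence|]. simpl. rewrite in_remove_iff. intuition.
  - split; [intros [[A|A] B]|intros [A|[A B]]]; auto. split; auto. intros ->; tauto.
  - rewrite fn_swap.
    destruct (Nat.eq_dec x m) as [->|Hxm]; [tauto|].
    destruct (Nat.eq_dec x n) as [->|Hxn].
    + rewrite swap_name_l. tauto.
    + rewrite swap_name_fresh; tauto.
Qed.

Definition fresh (l : list name) : name := S (fold_right max 0 l).

Lemma fresh_not_in l : ~ In (fresh l) l.
Proof.
  assert (Hle : forall x, In x l -> x <= fold_right max 0 l).
  { induction l as [|a l IHl]; simpl; [tauto|].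
    intros x [->|H]; [lia|specialize (IHl x H); lia]. }
  unfold fresh. intro H. apply Hle in H. lia.
Qed.

Lemma scong_nus A P Q : scong P Q -> scong (nus A P) (nus A Q).
Proof. induction A; simpl; auto using sc_res. Qed.

Lemma scong_nus_par A P R : (forall x, In x A -> ~ In x (fn R)) ->
  scong (PPar (nus A P) R) (nus A (PPar P R)).
Proof.
  induction A; simpl; intro H; [apply sc_refl|].
  eapply sc_trans; [apply sc_par_comm|].
  eapply sc_trans; [apply sc_sym, sc_res_par; auto|].
  apply sc_res. eapply sc_trans; [apply sc_par_comm|]. auto.
Qed.

Lemma scong_par_rotate P Q R : scong (PPar (PPar P Q) R) (PPar (PPar R P) Q).
Proof. eapply sc_trans; [apply sc_par_comm|]. apply sc_sym, sc_par_assoc. Qed.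

Lemma scong_par_swap_r P Q R : scong (PPar (PPar P Q) R) (PPar (PPar P R) Q).
Proof.
  eapply sc_trans; [apply sc_par_assoc|].
  eapply sc_trans; [apply sc_parr, sc_par_comm|]. apply sc_sym, sc_par_assoc.
Qed.

Lemma red_nus A P Q : red P Q -> red (nus A P) (nus A Q).
Proof. induction A; simpl; auto using r_res. Qed.

Lemma fill_scong C P Q : scong P Q -> scong (fill C P) (fill C Q).
Proof. induction C; simpl; auto using sc_amb, sc_act, sc_res, sc_parl, sc_parr. Qed.

Lemma barb_scong P Q n : scong P Q -> barb P n -> barb Q n.
Proof.
  intros H [A [P0 [R [HP HnA]]]]. exists A, P0, R.
  split; auto. eapply sc_trans; eauto using sc_sym.
Qed.

Fixpoint ambs (deep : bool) (P : proc) : list name :=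
  match P with
  | PNil | PAct _ _ => []
  | PAmb n Q => n :: (if deep then ambs deep Q else [])
  | PRes n Q => remove Nat.eq_dec n (ambs deep Q)
  | PPar P1 P2 => ambs deep P1 ++ ambs deep P2
  end.

Lemma ambs_fn deep P x : In x (ambs deep P) -> In x (fn P).
Proof.
  induction P; simpl; rewrite ?in_remove_iff, ?in_app_iff; intuition.
  destruct deep; simpl in *; intuition.
Qed.

Lemma ambs_top_deep P x : In x (ambs false P) -> In x (ambs true P).
Proof. induction P; simpl; rewrite ?in_remove_iff, ?in_app_iff; intuition. Qed.

Lemma ambs_swap deep a b P x : In x (ambs deep (swap a b P)) <-> In (swap_name a b x) (ambs deep P).
Proof.
  revert x; induction P; intro x; simpl.
  - tauto.
  - rewrite swap_name_eq_iff. destruct deep; simpl; [rewrite IHP|]; tauto.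
  - tauto.
  - now apply in_remove_swap.
  - rewrite !in_app_iff, IHP1, IHP2. tauto.
Qed.

Lemma ambs_nus deep A P x : In x (ambs deep (nus A P)) <-> In x (ambs deep P) /\ ~ In x A.
Proof. induction A; simpl; [tauto|]. rewrite in_remove_iff, IHA. intuition. Qed.

Lemma ambs_scong deep P Q : scong P Q -> forall x, In x (ambs deep P) <-> In x (ambs deep Q).
Proof.
  induction 1; intro x; simpl in *; rewrite ?in_app_iff, ?in_remove_iff, ?in_app_iff in *;
    try tauto.
  - symmetry; auto.
  - rewrite IHscong1; auto.
  - destruct deep; simpl; try rewrite IHscong; tauto.
  - rewrite IHscong; tauto.
  - rewrite IHscong; tauto.
  - rewrite IHscong; tauto.
  - simpl; tauto.
  - split; [intros [[A|A] B]|intros [A|[A B]]]; auto.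
    split; auto. intros ->. eauto using ambs_fn.
  - destruct (Nat.eq_dec n m); [congruence|].
    destruct deep; simpl; rewrite ?in_remove_iff; intuition.
  - rewrite ambs_swap.
    destruct (Nat.eq_dec x m) as [->|Hxm].
    + split; intros [A B]; [|tauto].
      destruct (Nat.eq_dec m n) as [->|]; [tauto|]. exfalso; eauto using ambs_fn.
    + destruct (Nat.eq_dec x n) as [->|Hxn].
      * rewrite swap_name_l. split; intros [A B]; [tauto|]. exfalso; eauto using ambs_fn.
      * rewrite swap_name_fresh; tauto.
Qed.

Lemma barb_top_amb P n : barb P n -> In n (ambs false P).
Proof.
  intros [A [Q [R [H HnA]]]].
  apply (ambs_scong false _ _ H), ambs_nus. simpl; auto.
Qed.

Lemma top_amb_barb_avoiding P x L : In x (ambs false P) ->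
  exists A Q R, scong P (nus A (PPar (PAmb x Q) R)) /\ ~ In x A /\
                (forall y, In y A -> ~ In y L).
Proof.
  revert L; induction P; simpl; intros L H; try tauto.
  - destruct H as [<-|[]]. exists [], P, PNil. simpl.
    split; [apply sc_sym, sc_par_nil|auto].
  - apply in_remove_iff in H as [H Hxn].
    set (a := fresh (L ++ fn P ++ [x; n])).
    assert (Ha : ~ In a (L ++ fn P ++ [x; n])) by apply fresh_not_in.
    rewrite !in_app_iff in Ha. simpl in Ha.
    destruct (IHP (a :: L) H) as [A [Q [R [H1 [H2 H3]]]]].
    assert (Hsx : swap_name n a x = x) by (apply swap_name_fresh; intuition).
    exists (a :: map (swap_name n a) A), (swap n a Q), (swap n a R). split; [|split].
    + eapply sc_trans; [apply sc_res, H1|].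
      eapply sc_trans; [apply sc_alpha with (m := a)|].
      { intro Hf. apply (fn_scong _ _ H1) in Hf. tauto. }
      rewrite swap_nus. simpl. rewrite Hsx. apply sc_refl.
    + simpl. rewrite in_map_swap_name, Hsx. intuition.
    + apply rename_fresh_avoids; tauto.
  - rewrite in_app_iff in H.
    destruct H as [H|H];
      [ destruct (IHP1 (L ++ fn P2) H) as [A [Q [R [H1 [H2 H3]]]]]
      | destruct (IHP2 (L ++ fn P1) H) as [A [Q [R [H1 [H2 H3]]]]] ];
      [exists A, Q, (PPar R P2) | exists A, Q, (PPar R P1)];
      (split; [|split]; auto; [|intros y Hy; specialize (H3 y Hy); rewrite in_app_iff in H3; tauto]).
    + eapply sc_trans; [apply sc_parl, H1|].
      eapply sc_trans; [apply scong_nus_par|apply scong_nus, sc_par_assoc].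
      intros y Hy. specialize (H3 y Hy). rewrite in_app_iff in H3. tauto.
    + eapply sc_trans; [apply sc_par_comm|].
      eapply sc_trans; [apply sc_parl, H1|].
      eapply sc_trans; [apply scong_nus_par|apply scong_nus, sc_par_assoc].
      intros y Hy. specialize (H3 y Hy). rewrite in_app_iff in H3. tauto.
Qed.

Lemma top_amb_barb P x : In x (ambs false P) -> barb P x.
Proof.
  intro H. destruct (top_amb_barb_avoiding P x [] H) as [A [Q [R [H1 [H2 _]]]]].
  exists A, Q, R; auto.
Qed.

Inductive occ := OccAmb | OccIn | OccOut | OccOpen.

Definition cap_name (M : cap) : name := match M with CIn n | COut n | COpen n => n end.

Definition cap_occ (M : cap) : occ :=
  match M with CIn _ => OccIn | COut _ => OccOut | COpen _ => OccOpen end.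

Fixpoint occ_count (w : occ -> nat) (k : name) (P : proc) : nat :=
  match P with
  | PNil => 0
  | PAmb n Q => (if Nat.eqb n k then w OccAmb else 0) + occ_count w k Q
  | PAct M Q => (if Nat.eqb (cap_name M) k then w (cap_occ M) else 0) + occ_count w k Q
  | PRes n Q => if Nat.eqb n k then 0 else occ_count w k Q
  | PPar P1 P2 => occ_count w k P1 + occ_count w k P2
  end.

Definition w_all (_ : occ) : nat := 1.
Definition w_amb (o : occ) : nat := match o with OccAmb => 1 | _ => 0 end.
Definition w_move (o : occ) : nat := match o with OccIn | OccOut => 1 | _ => 0 end.
Definition w_open (o : occ) : nat := match o with OccOpen => 1 | _ => 0 end.

Lemma fn_cap_name M : fn_cap M = [cap_name M].
Proof. now destruct M. Qed.

Lemma occ_count_swap w a b k P : occ_count w k (swap a b P) = occ_count w (swap_name a b k) P.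
Proof.
  assert (Hname : forall M, cap_name (swap_cap a b M) = swap_name a b (cap_name M))
    by now intros [].
  assert (Hocc : forall M, cap_occ (swap_cap a b M) = cap_occ M) by now intros [].
  induction P; simpl; rewrite ?Hname, ?Hocc, ?swap_name_eqb_l, ?IHP, ?IHP1, ?IHP2; auto.
Qed.

Lemma occ_count_fresh w k P : ~ In k (fn P) -> occ_count w k P = 0.
Proof.
  induction P; simpl; rewrite ?in_app_iff, ?fn_cap_name, ?in_remove_iff; simpl; intro H.
  - auto.
  - destruct (Nat.eqb_spec n k); intuition.
  - destruct (Nat.eqb_spec (cap_name c) k); intuition.
  - destruct (Nat.eqb_spec n k); intuition.
  - rewrite IHP1, IHP2; intuition.
Qed.

Lemma occ_count_all_pos k P : In k (fn P) -> 1 <= occ_count w_all k P.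
Proof.
  induction P; simpl; rewrite ?in_app_iff, ?fn_cap_name, ?in_remove_iff; simpl; intro H.
  - destruct H.
  - destruct H as [->|H]; [rewrite Nat.eqb_refl; unfold w_all|specialize (IHP H)]; lia.
  - destruct H as [[->|[]]|H]; [rewrite Nat.eqb_refl; unfold w_all|specialize (IHP H)]; lia.
  - destruct H as [H Hnk]. destruct (Nat.eqb_spec n k); [congruence|auto].
  - destruct H as [H|H]; [specialize (IHP1 H)|specialize (IHP2 H)]; lia.
Qed.

Lemma occ_count_all_zero k P : occ_count w_all k P = 0 -> ~ In k (fn P).
Proof. intros H H'. pose proof (occ_count_all_pos k P H'). lia. Qed.

Lemma occ_count_add w w1 w2 k P : (forall o, w o = w1 o + w2 o) ->
  occ_count w k P = occ_count w1 k P + occ_count w2 k P.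
Proof.
  intro Hw. induction P; simpl; rewrite ?Hw, ?IHP, ?IHP1, ?IHP2; try lia;
    repeat match goal with |- context [Nat.eqb ?a ?b] => destruct (Nat.eqb a b) end; lia.
Qed.

Lemma occ_count_all_split k P :
  occ_count w_all k P = occ_count w_amb k P + occ_count w_move k P + occ_count w_open k P.
Proof.
  rewrite (occ_count_add w_all (fun o => w_amb o + w_move o) w_open) by now intros [].
  rewrite (occ_count_add _ w_amb w_move) by reflexivity. reflexivity.
Qed.

Lemma occ_count_nus w k A P : ~ In k A -> occ_count w k (nus A P) = occ_count w k P.
Proof.
  induction A; simpl; auto. intro H. destruct (Nat.eqb_spec a k); intuition.
Qed.

Lemma occ_count_scong w k P Q : scong P Q -> occ_count w k P = occ_count w k Q.
Proof.
  induction 1; simpl; try lia.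
  - destruct (Nat.eqb n k); lia.
  - destruct (Nat.eqb n k), (Nat.eqb m k); lia.
  - destruct (Nat.eqb_spec n k) as [->|]; [rewrite occ_count_fresh; auto|auto].
  - destruct (Nat.eqb_spec n k), (Nat.eqb_spec m k); subst; try congruence; lia.
  - rewrite fn_cap_name in H. simpl in H.
    destruct (Nat.eqb_spec n k), (Nat.eqb_spec (cap_name M) k); subst; intuition.
  - rewrite occ_count_swap.
    destruct (Nat.eqb_spec n k), (Nat.eqb_spec m k); subst; auto.
    + rewrite swap_name_l, occ_count_fresh; auto.
    + rewrite occ_count_fresh; auto.
    + rewrite swap_name_fresh; auto.
Qed.

Lemma top_amb_occ_count k P : In k (ambs false P) -> 1 <= occ_count w_amb k P.
Proof.
  induction P; simpl; intro H; try tauto.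
  - destruct H as [->|[]]. rewrite Nat.eqb_refl. simpl; lia.
  - apply in_remove_iff in H as [H Hkn].
    destruct (Nat.eqb_spec n k); [congruence|auto].
  - rewrite in_app_iff in H. destruct H as [H|H]; [specialize (IHP1 H)|specialize (IHP2 H)]; lia.
Qed.

Fixpoint inert (P : proc) : Prop :=
  match P with
  | PNil => True
  | PAmb _ _ | PAct _ _ => False
  | PRes _ Q => inert Q
  | PPar P1 P2 => inert P1 /\ inert P2
  end.

(* Inert [k]-ambients cannot move, so only [open k] can make them disappear. *)
Fixpoint amb_inert (k : name) (P : proc) : Prop :=
  match P with
  | PNil => True
  | PAmb n Q => (n = k -> inert Q) /\ amb_inert k Q
  | PAct _ Q => amb_inert k Q
  | PRes n Q => n = k \/ amb_inert k Q
  | PPar P1 P2 => amb_inert k P1 /\ amb_inert k P2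
  end.

Lemma inert_swap a b P : inert (swap a b P) <-> inert P.
Proof. induction P; simpl; tauto. Qed.

Lemma inert_scong P Q : scong P Q -> (inert P <-> inert Q).
Proof. induction 1; simpl; try tauto. rewrite inert_swap; tauto. Qed.

Lemma amb_inert_swap a b k P : amb_inert (swap_name a b k) (swap a b P) <-> amb_inert k P.
Proof.
  induction P; simpl; rewrite ?inert_swap, ?IHP, ?IHP1, ?IHP2; try tauto.
  - split; intros [A B]; split; auto; intro E; apply A; subst; auto.
    eapply swap_name_inj; eauto.
  - split; intros [A|A]; auto; left; eapply swap_name_inj; eauto.
Qed.

Lemma amb_inert_fresh k P : ~ In k (fn P) -> amb_inert k P.
Proof.
  induction P; simpl; rewrite ?in_app_iff, ?in_remove_iff; intro H.
  - auto.
  - split; [intros ->; exfalso; apply H; now left|apply IHP; tauto].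
  - apply IHP; tauto.
  - destruct (Nat.eq_dec n k); [now left|right; apply IHP; intro; apply H; auto].
  - split; [apply IHP1|apply IHP2]; tauto.
Qed.

Lemma amb_inert_nus k A P : amb_inert k P -> amb_inert k (nus A P).
Proof. induction A; simpl; auto. Qed.

Lemma amb_inert_scong k P Q : scong P Q -> (amb_inert k P <-> amb_inert k Q).
Proof.
  induction 1; simpl; try tauto.
  - rewrite (inert_scong _ _ H). tauto.
  - split; [intros [->|[A B]]|intros [A [B|B]]]; auto using amb_inert_fresh.
  - split; [intros [->|[A B]]|intros [A [B|B]]]; auto. split; [congruence|auto].
  - destruct (Nat.eq_dec m k) as [->|Hm].
    { split; auto using amb_inert_fresh. }
    destruct (Nat.eq_dec n k) as [->|Hn].
    + pose proof (amb_inert_swap k m m P) as E. rewrite swap_name_r in E. rewrite E.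
      split; auto using amb_inert_fresh.
    + pose proof (amb_inert_swap n m k P) as E. rewrite swap_name_fresh in E by auto.
      rewrite E. tauto.
Qed.

Definition bind_opener (a : name) (o : option (option name)) : option (option name) :=
  match o with Some (Some m) => if Nat.eqb m a then Some None else o | _ => o end.

Definition first_some {X} (o1 o2 : option X) : option X :=
  match o1 with None => o2 | _ => o1 end.

Definition map_opener (f : name -> name) (o : option (option name)) : option (option name) :=
  match o with Some (Some m) => Some (Some (f m)) | _ => o end.

Lemma bind_opener_rename n a m A : ~ In a A -> m <> a ->
  bind_opener n (Some (if in_dec Nat.eq_dec m A then None else Some m)) =
  Some (if in_dec Nat.eq_dec (swap_name n a m) (a :: map (swap_name n a) A)
        then None else Some (swap_name n a m)).
Proof.
  intros HaA Hma. unfold bind_opener.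
  destruct (in_dec Nat.eq_dec m A) as [Hm|Hm];
    destruct (in_dec Nat.eq_dec (swap_name n a m) (a :: map (swap_name n a) A)) as [Hi|Hi];
    simpl in Hi; rewrite in_map_swap_name, swap_name_involutive in Hi; try tauto.
  - destruct (Nat.eqb_spec m n) as [->|Hmn]; auto.
    rewrite swap_name_fresh in Hi by auto. destruct Hi; [congruence|tauto].
  - destruct (Nat.eqb_spec m n) as [->|Hmn].
    + rewrite swap_name_l in Hi. tauto.
    + now rewrite swap_name_fresh.
Qed.

(* [opener k P] locates the top-level prefix [open m.U] with [k] free in [U]:
   it is [Some (Some m)] if [m] is free in [P], [Some None] if [m] is bound in [P],
   and [None] if there is no such prefix. *)
Fixpoint opener (k : name) (P : proc) : option (option name) :=
  match P with
  | PAct (COpen m) U => if in_dec Nat.eq_dec k (fn U) then Some (Some m) else None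
  | PRes a Q => if Nat.eqb a k then None else bind_opener a (opener k Q)
  | PPar P1 P2 => first_some (opener k P1) (opener k P2)
  | _ => None
  end.

Lemma opener_fresh k P : ~ In k (fn P) -> opener k P = None.
Proof.
  induction P; simpl; rewrite ?in_app_iff, ?in_remove_iff; intro H; auto.
  - destruct c; auto. destruct (in_dec Nat.eq_dec k (fn P)); simpl in H; tauto.
  - destruct (Nat.eqb_spec n k); auto. rewrite IHP; auto.
  - rewrite IHP1, IHP2; auto.
Qed.

Lemma opener_fn k P o : opener k P = Some o -> In k (fn P).
Proof.
  revert o; induction P; simpl; intros o H; try discriminate.
  - destruct c; try discriminate. destruct (in_dec Nat.eq_dec k (fn P)); [simpl; auto|discriminate].
  - destruct (Nat.eqb_spec n k); try discriminate. apply in_remove_iff; split; auto.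
    destruct (opener k P) as [[m|]|]; simpl in H; try discriminate; eauto.
  - rewrite in_app_iff. destruct (opener k P1) eqn:E; simpl in H; eauto.
Qed.

Lemma opener_name_fn k P m : opener k P = Some (Some m) -> In m (fn P).
Proof.
  induction P; simpl; intro H; try discriminate.
  - destruct c; try discriminate.
    destruct (in_dec Nat.eq_dec k (fn P)); [simpl; left; congruence|discriminate].
  - destruct (Nat.eqb_spec n k); try discriminate. apply in_remove_iff.
    destruct (opener k P) as [[m'|]|]; simpl in H; try discriminate.
    destruct (Nat.eqb_spec m' n); [discriminate|]. injection H as ->. auto.
  - rewrite in_app_iff. destruct (opener k P1) eqn:E; simpl in H; subst; eauto.
Qed.

Lemma opener_swap a b k P :
  opener (swap_name a b k) (swap a b P) = map_opener (swap_name a b) (opener k P).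
Proof.
  induction P; simpl; auto.
  - destruct c; simpl; auto.
    destruct (in_dec Nat.eq_dec (swap_name a b k) (fn (swap a b P))) as [Hi|Hi];
      rewrite fn_swap, swap_name_involutive in Hi;
      destruct (in_dec Nat.eq_dec k (fn P)); tauto.
  - rewrite swap_name_eqb. destruct (Nat.eqb n k); auto. rewrite IHP.
    destruct (opener k P) as [[m|]|]; simpl; auto.
    rewrite swap_name_eqb. now destruct (Nat.eqb m n).
  - rewrite IHP1, IHP2. now destruct (opener k P1) as [[m|]|].
Qed.

Lemma opener_alpha k n m P : ~ In m (fn P) ->
  (if Nat.eqb n k then None else bind_opener n (opener k P)) =
  (if Nat.eqb m k then None else bind_opener m (opener k (swap n m P))).
Proof.
  intro Hm.
  destruct (Nat.eqb_spec n k), (Nat.eqb_spec m k); subst; auto.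
  - pose proof (opener_swap k m m P) as E. rewrite swap_name_r in E.
    rewrite E, opener_fresh; auto.
  - rewrite opener_fresh; auto.
  - pose proof (opener_swap n m k P) as E. rewrite swap_name_fresh in E by auto.
    rewrite E. destruct (opener k P) as [[x|]|] eqn:Ex; simpl; auto.
    apply opener_name_fn in Ex.
    destruct (Nat.eqb_spec x n) as [->|Hxn].
    + now rewrite swap_name_l, Nat.eqb_refl.
    + rewrite swap_name_fresh by (auto; intros ->; tauto).
      destruct (Nat.eqb_spec x m); [subst; tauto|auto].
Qed.

Lemma opener_scong k P Q : scong P Q -> occ_count w_all k P <= 1 -> opener k P = opener k Q.
Proof.
  induction 1; simpl; intro Hc; auto.
  - symmetry; apply IHscong. now rewrite (occ_count_scong _ _ _ _ H).
  - rewrite IHscong1 by auto. apply IHscong2. now rewrite <- (occ_count_scong _ _ _ _ H).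
  - destruct M; auto. pose proof (fn_scong _ _ H k).
    destruct (in_dec Nat.eq_dec k (fn P)), (in_dec Nat.eq_dec k (fn Q)); tauto.
  - destruct (Nat.eqb n k); auto. rewrite IHscong; auto.
  - rewrite IHscong; auto. lia.
  - rewrite IHscong; auto. lia.
  - destruct (opener k P) eqn:E1, (opener k Q) eqn:E2; auto. exfalso.
    apply opener_fn, occ_count_all_pos in E1. apply opener_fn, occ_count_all_pos in E2. lia.
  - now destruct (opener k P).
  - now destruct (opener k P).
  - destruct (Nat.eqb_spec n k), (Nat.eqb_spec m k); auto.
    destruct (opener k P) as [[x|]|]; simpl; auto.
    destruct (Nat.eqb_spec x m), (Nat.eqb_spec x n); subst; simpl;
      repeat match goal with |- context [Nat.eqb ?a ?b] => destruct (Nat.eqb_spec a b) end;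
      congruence.
  - destruct (Nat.eqb_spec n k) as [->|]; [now rewrite opener_fresh|].
    destruct (opener k P) as [[x|]|] eqn:E; simpl; auto.
    destruct (Nat.eqb_spec x n); auto. subst. apply opener_name_fn in E. tauto.
  - now destruct (Nat.eqb n k).
  - destruct M as [m|m|m]; simpl in *; try now destruct (Nat.eqb n k).
    destruct (Nat.eqb_spec n k) as [->|Hnk].
    + destruct (in_dec Nat.eq_dec k (remove Nat.eq_dec k (fn P))) as [Hi|]; auto.
      apply in_remove_iff in Hi. tauto.
    + destruct (in_dec Nat.eq_dec k (fn P)) as [Hi|Hi];
        destruct (in_dec Nat.eq_dec k (remove Nat.eq_dec n (fn P))) as [Hj|Hj];
        rewrite in_remove_iff in Hj; simpl; try tauto.
      * destruct (Nat.eqb_spec m n); [subst; tauto|reflexivity].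
      * exfalso; apply Hj; auto.
  - now apply opener_alpha.
Qed.

Fixpoint fire_opener (k : name) (P : proc) : proc :=
  match P with
  | PAct (COpen m) U => if in_dec Nat.eq_dec k (fn U) then U else P
  | PRes a Q => if Nat.eqb a k then P else PRes a (fire_opener k Q)
  | PPar P1 P2 => PPar (fire_opener k P1) (fire_opener k P2)
  | _ => P
  end.

Fixpoint dissolve (k : name) (P : proc) : proc :=
  match P with
  | PAmb n Q => if Nat.eqb n k then Q else P
  | PAct (COpen m) U => if Nat.eqb m k then U else P
  | PRes a Q => if Nat.eqb a k then P else PRes a (dissolve k Q)
  | PPar P1 P2 => PPar (dissolve k P1) (dissolve k P2)
  | _ => P
  end.

Lemma fire_opener_fresh k P : ~ In k (fn P) -> fire_opener k P = P.
Proof.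
  induction P; simpl; rewrite ?in_app_iff, ?in_remove_iff; intro H; auto.
  - destruct c; auto. destruct (in_dec Nat.eq_dec k (fn P)); simpl in H; tauto.
  - destruct (Nat.eqb_spec n k); auto. rewrite IHP; auto.
  - rewrite IHP1, IHP2; auto.
Qed.

Lemma dissolve_fresh k P : ~ In k (fn P) -> dissolve k P = P.
Proof.
  induction P; simpl; rewrite ?in_app_iff, ?in_remove_iff; intro H; auto.
  - destruct (Nat.eqb_spec n k); subst; tauto.
  - destruct c; auto. destruct (Nat.eqb_spec n k); subst; simpl in H; tauto.
  - destruct (Nat.eqb_spec n k); auto. rewrite IHP; auto.
  - rewrite IHP1, IHP2; auto.
Qed.

Lemma fire_opener_fn k P x : In x (fn (fire_opener k P)) -> In x (fn P).
Proof.
  induction P; simpl; auto.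
  - destruct c; simpl; auto. destruct (in_dec Nat.eq_dec k (fn P)); simpl; auto.
  - destruct (Nat.eqb_spec n k); simpl; auto. rewrite !in_remove_iff; intuition.
  - rewrite !in_app_iff; intuition.
Qed.

Lemma dissolve_fn k P x : In x (fn (dissolve k P)) -> In x (fn P).
Proof.
  induction P; simpl; auto.
  - destruct (Nat.eqb_spec n k); simpl; auto.
  - destruct c; simpl; auto. destruct (Nat.eqb_spec n k); simpl; auto.
  - destruct (Nat.eqb_spec n k); simpl; auto. rewrite !in_remove_iff; intuition.
  - rewrite !in_app_iff; intuition.
Qed.

Lemma fire_opener_swap a b k P :
  fire_opener (swap_name a b k) (swap a b P) = swap a b (fire_opener k P).
Proof.
  induction P; simpl; auto.
  - destruct c; simpl; auto.
    destruct (in_dec Nat.eq_dec (swap_name a b k) (fn (swap a b P))) as [Hi|Hi];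
      rewrite fn_swap, swap_name_involutive in Hi;
      destruct (in_dec Nat.eq_dec k (fn P)); simpl; tauto.
  - rewrite swap_name_eqb. destruct (Nat.eqb n k); simpl; auto. now rewrite IHP.
  - now rewrite IHP1, IHP2.
Qed.

Lemma dissolve_swap a b k P : dissolve (swap_name a b k) (swap a b P) = swap a b (dissolve k P).
Proof.
  induction P; simpl; auto.
  - rewrite swap_name_eqb. now destruct (Nat.eqb n k).
  - destruct c; simpl; auto. rewrite swap_name_eqb. now destruct (Nat.eqb n k).
  - rewrite swap_name_eqb. destruct (Nat.eqb n k); simpl; auto. now rewrite IHP.
  - now rewrite IHP1, IHP2.
Qed.

Lemma dissolve_nus k A P : ~ In k A -> dissolve k (nus A P) = nus A (dissolve k P).
Proof.
  induction A; simpl; auto. intro H.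
  destruct (Nat.eqb_spec a k); subst; intuition. congruence.
Qed.

Section ScongUnderRestriction.

Variable f : name -> proc -> proc.
Hypothesis f_fresh : forall k P, ~ In k (fn P) -> f k P = P.
Hypothesis f_fn : forall k P x, In x (fn (f k P)) -> In x (fn P).
Hypothesis f_swap : forall a b k P, f (swap_name a b k) (swap a b P) = swap a b (f k P).

Lemma scong_alpha_under k n m P : ~ In m (fn P) ->
  scong (if Nat.eqb n k then PRes n P else PRes n (f k P))
        (if Nat.eqb m k then PRes m (swap n m P) else PRes m (f k (swap n m P))).
Proof.
  intro Hm. destruct (Nat.eqb_spec n k), (Nat.eqb_spec m k); subst.
  - rewrite swap_id. apply sc_refl.
  - rewrite f_fresh; [now apply sc_alpha|].
    rewrite fn_swap, swap_name_l. auto.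
  - rewrite f_fresh by auto. now apply sc_alpha.
  - rewrite <- (swap_name_fresh n m k) at 2 by auto. rewrite f_swap.
    apply sc_alpha. eauto.
Qed.

End ScongUnderRestriction.

Lemma fire_opener_scong k P Q : scong P Q -> scong (fire_opener k P) (fire_opener k Q).
Proof.
  induction 1; simpl; eauto using sc_refl, sc_sym, sc_trans, sc_amb, sc_parl, sc_parr,
    sc_par_comm, sc_par_assoc, sc_par_nil, sc_res_amb.
  - destruct M; try (apply sc_act; auto).
    pose proof (fn_scong _ _ H k).
    destruct (in_dec Nat.eq_dec k (fn P)), (in_dec Nat.eq_dec k (fn Q)); try tauto.
    now apply sc_act.
  - destruct (Nat.eqb n k); apply sc_res; auto.
  - destruct (Nat.eqb_spec n k), (Nat.eqb_spec m k); subst; try congruence; apply sc_res_res.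
  - destruct (Nat.eqb_spec n k) as [->|].
    + rewrite fire_opener_fresh; auto. now apply sc_res_par.
    + apply sc_res_par. eauto using fire_opener_fn.
  - destruct (Nat.eqb n k); now apply sc_res_amb.
  - rewrite fn_cap_name in H. simpl in H.
    destruct (Nat.eqb_spec n k) as [->|Hnk]; destruct M as [m|m|m]; simpl in *;
      try (apply sc_res_act; simpl; tauto).
    + destruct (in_dec Nat.eq_dec k (remove Nat.eq_dec k (fn P))) as [Hi|];
        [apply in_remove_iff in Hi; tauto|now apply sc_res_act].
    + destruct (in_dec Nat.eq_dec k (fn P)) as [Hi|Hi];
        destruct (in_dec Nat.eq_dec k (remove Nat.eq_dec n (fn P))) as [Hj|Hj];
        rewrite in_remove_iff in Hj.
      * apply sc_refl.
      * exfalso; apply Hj; auto.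
      * tauto.
      * now apply sc_res_act.
  - apply scong_alpha_under; eauto using fire_opener_fresh, fire_opener_fn, fire_opener_swap.
Qed.

Lemma dissolve_scong k P Q : scong P Q -> scong (dissolve k P) (dissolve k Q).
Proof.
  induction 1; simpl; eauto using sc_refl, sc_sym, sc_trans, sc_parl, sc_parr,
    sc_par_comm, sc_par_assoc, sc_par_nil.
  - destruct (Nat.eqb n k); auto. now apply sc_amb.
  - destruct M; try (apply sc_act; auto). destruct (Nat.eqb n k); auto. now apply sc_act.
  - destruct (Nat.eqb n k); apply sc_res; auto.
  - destruct (Nat.eqb_spec n k), (Nat.eqb_spec m k); subst; try congruence; apply sc_res_res.
  - destruct (Nat.eqb_spec n k) as [->|].
    + rewrite dissolve_fresh; auto. now apply sc_res_par.
    + apply sc_res_par. eauto using dissolve_fn.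
  - destruct (Nat.eqb_spec n k), (Nat.eqb_spec m k); subst; try congruence;
      auto using sc_res_amb, sc_refl.
  - rewrite fn_cap_name in H. simpl in H.
    destruct (Nat.eqb_spec n k) as [->|Hnk];
      destruct M as [m|m|m]; simpl in *; try (apply sc_res_act; simpl; tauto);
      destruct (Nat.eqb_spec m k) as [->|]; try tauto; try apply sc_refl;
      apply sc_res_act; simpl; tauto.
  - apply scong_alpha_under; eauto using dissolve_fresh, dissolve_fn, dissolve_swap.
Qed.

Lemma red_removing_top_amb k Y W : red Y W ->
  amb_inert k Y -> occ_count w_amb k Y <= 1 -> occ_count w_open k Y <= 1 ->
  occ_count w_move k Y = 0 -> In k (ambs false Y) -> ~ In k (ambs false W) ->
  1 <= occ_count w_open k Y /\ scong W (dissolve k Y).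
Proof.
  induction 1; simpl; intros HK HA HO HM Hin Hout.
  - destruct Hin as [<-|[<-|[]]].
    + destruct HK as [[HK _] _]. exfalso; now apply HK.
    + rewrite Nat.eqb_refl in HM. simpl in HM. lia.
  - destruct Hin as [<-|[]]. rewrite Nat.eqb_refl in HM. simpl in HM. lia.
  - destruct Hin as [<-|[]]. rewrite !Nat.eqb_refl. split; [simpl; lia|apply sc_refl].
  - apply in_remove_iff in Hin as [Hin Hkn].
    destruct (Nat.eqb_spec n k); [congruence|].
    destruct HK as [HK|HK]; [congruence|].
    destruct IHred as [H1 H2]; auto.
    { intro; apply Hout, in_remove_iff; auto. }
    split; auto. now apply sc_res.
  - destruct Hin as [<-|[]]. exfalso; apply Hout; simpl; auto.
  - rewrite in_app_iff in Hin, Hout. destruct HK as [HK1 HK2].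
    assert (HinP : In k (ambs false P)) by tauto.
    destruct IHred as [H1 H2]; try lia; auto.
    pose proof (top_amb_occ_count k P HinP).
    assert (HR : occ_count w_all k R = 0) by (rewrite occ_count_all_split; lia).
    rewrite (dissolve_fresh k R) by now apply occ_count_all_zero.
    split; [lia|]. now apply sc_parl.
  - rewrite (occ_count_scong w_amb _ _ _ H) in HA.
    rewrite (occ_count_scong w_move _ _ _ H) in HM.
    rewrite (occ_count_scong w_open _ _ _ H) in HO |- *.
    rewrite (amb_inert_scong _ _ _ H) in HK. rewrite (ambs_scong _ _ _ H) in Hin.
    rewrite <- (ambs_scong _ _ _ H1) in Hout.
    destruct IHred as [Ho HW]; auto. split; auto.
    eapply sc_trans; [apply sc_sym, H1|]. eapply sc_trans; [apply HW|].
    now apply dissolve_scong, sc_sym.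
Qed.

(* [X] arises from [Y] by the unique opener of [k] dissolving an ambient [m[V]],
   which brings the [k]-ambient of its continuation [U] to top level. *)
Inductive fired_opener (k : name) (L : list name) (Y X : proc) : Prop :=
  FiredOpener (m : name) (A : list name) (V U R : proc) :
    (forall y, In y A -> ~ In y L) -> ~ In k A -> m <> k ->
    opener k Y = Some (if in_dec Nat.eq_dec m A then None else Some m) ->
    scong X (nus A (PPar (PPar V U) R)) ->
    scong (dissolve k (fire_opener k Y)) (nus A (PPar (PPar (PAmb m V) (dissolve k U)) R)) ->
    occ_count w_all k V = 0 -> occ_count w_all k R = 0 -> occ_count w_all k U <= 1 ->
    In k (ambs false U) -> amb_inert k U ->
    fired_opener k L Y X.

Lemma fired_opener_open k L m P Q (Y := PPar (PAct (COpen m) P) (PAmb m Q)) :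
  amb_inert k P -> occ_count w_all k Y <= 1 -> In k (ambs false P) ->
  fired_opener k L Y (PPar P Q).
Proof.
  intros HK HC Hin.
  assert (HkP : In k (fn P)) by eauto using ambs_fn.
  pose proof (occ_count_all_pos k P HkP). simpl in HC.
  assert (Hmk : m <> k) by (intros ->; rewrite Nat.eqb_refl in HC; unfold w_all in HC; lia).
  rewrite (proj2 (Nat.eqb_neq m k) Hmk) in HC.
  exists m [] Q P PNil; simpl; auto; try lia.
  - destruct (in_dec Nat.eq_dec k (fn P)); tauto.
  - apply sc_sym. eapply sc_trans; [apply sc_par_nil|apply sc_par_comm].
  - destruct (in_dec Nat.eq_dec k (fn P)); [|tauto]. rewrite (proj2 (Nat.eqb_neq m k) Hmk).
    apply sc_sym. eapply sc_trans; [apply sc_par_nil|apply sc_par_comm].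
Qed.

Lemma fired_opener_res k L n P P' : n <> k ->
  (forall L', fired_opener k L' P P') -> fired_opener k L (PRes n P) (PRes n P').
Proof.
  intros Hnk IH.
  set (a := fresh (L ++ fn P ++ fn P' ++ [k; n])).
  assert (Ha : ~ In a (L ++ fn P ++ fn P' ++ [k; n])) by apply fresh_not_in.
  clearbody a. rewrite !in_app_iff in Ha. simpl in Ha.
  destruct (IH (a :: L)) as [m A V U R HAL HkA Hmk Hop HX HY HV HR HU Hin HK].
  assert (Hsk : swap_name n a k = k) by (apply swap_name_fresh; intuition).
  assert (HaA : ~ In a A) by (intro Hx; apply HAL in Hx; simpl in Hx; tauto).
  assert (Hma : m <> a).
  { intros ->. destruct (in_dec Nat.eq_dec a A); [tauto|].
    apply opener_name_fn in Hop; tauto. }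
  assert (Hnk' : Nat.eqb n k = false) by now apply Nat.eqb_neq.
  exists (swap_name n a m) (a :: map (swap_name n a) A) (swap n a V) (swap n a U) (swap n a R);
    rewrite ?occ_count_swap, ?ambs_swap, ?Hsk; auto.
  - apply rename_fresh_avoids; tauto.
  - intros [->|Hx]; [tauto|]. rewrite in_map_swap_name, Hsk in Hx. tauto.
  - intro Hx. apply Hmk. rewrite <- Hsk in Hx. eapply swap_name_inj; eauto.
  - cbn [opener]. rewrite Hnk', Hop. now apply bind_opener_rename.
  - eapply sc_trans; [apply sc_res, HX|].
    eapply sc_trans; [apply sc_alpha with (m := a)|].
    { intro Hf. apply (fn_scong _ _ HX) in Hf. tauto. }
    rewrite swap_nus. apply sc_refl.
  - cbn [fire_opener]. rewrite Hnk'. cbn [dissolve]. rewrite Hnk'.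
    eapply sc_trans; [apply sc_res, HY|].
    eapply sc_trans; [apply sc_alpha with (m := a)|].
    { intro Hf. apply (fn_scong _ _ HY), dissolve_fn, fire_opener_fn in Hf. tauto. }
    rewrite swap_nus. simpl. rewrite <- dissolve_swap, Hsk. apply sc_refl.
  - rewrite <- Hsk at 1. now rewrite amb_inert_swap.
Qed.

Lemma fired_opener_par k L P P' R : ~ In k (fn R) ->
  fired_opener k (L ++ fn R) P P' -> fired_opener k L (PPar P R) (PPar P' R).
Proof.
  intros HkR [m A V U R0 HAL HkA Hmk Hop HX HY HV HR HU Hin HK].
  assert (HAR : forall y, In y A -> ~ In y (fn R)).
  { intros y Hy. specialize (HAL y Hy). rewrite in_app_iff in HAL. tauto. }
  exists m A V U (PPar R0 R); simpl; auto.
  - intros y Hy. specialize (HAL y Hy). rewrite in_app_iff in HAL. tauto.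
  - now rewrite Hop.
  - eapply sc_trans; [apply sc_parl, HX|].
    eapply sc_trans; [apply scong_nus_par; auto|apply scong_nus, sc_par_assoc].
  - rewrite (fire_opener_fresh k R HkR), (dissolve_fresh k R HkR).
    eapply sc_trans; [apply sc_parl, HY|].
    eapply sc_trans; [apply scong_nus_par; auto|apply scong_nus, sc_par_assoc].
  - rewrite HR, occ_count_fresh; auto.
Qed.

Lemma fired_opener_scong k L Y Y' X X' :
  scong Y Y' -> scong X' X -> occ_count w_all k Y <= 1 ->
  fired_opener k L Y' X' -> fired_opener k L Y X.
Proof.
  intros HYY HXX HC [m A V U R HAL HkA Hmk Hop HX HY HV HR HU Hin HK].
  exists m A V U R; auto.
  - now rewrite (opener_scong _ _ _ HYY HC).
  - eapply sc_trans; [apply sc_sym, HXX|exact HX].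
  - eapply sc_trans; [apply dissolve_scong, fire_opener_scong, HYY|exact HY].
Qed.

Lemma red_exposing_top_amb k Y X : red Y X ->
  amb_inert k Y -> occ_count w_all k Y <= 1 ->
  ~ In k (ambs true Y) -> In k (ambs false X) ->
  forall L, fired_opener k L Y X.
Proof.
  induction 1; simpl; intros HK HC Hdeep Hin L.
  - exfalso. destruct Hin as [<-|[]]. apply Hdeep. rewrite in_app_iff; simpl; auto.
  - exfalso. destruct Hin as [<-|[<-|[]]]; apply Hdeep; simpl; rewrite ?in_app_iff; simpl; auto.
  - rewrite in_app_iff in Hin. destruct Hin as [Hin|Hin].
    + apply fired_opener_open; simpl; tauto.
    + exfalso; apply Hdeep; simpl; auto using ambs_top_deep.
  - apply in_remove_iff in Hin as [Hin Hkn].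
    destruct (Nat.eqb_spec n k); [congruence|].
    destruct HK as [HK|HK]; [congruence|].
    apply fired_opener_res; auto.
    apply IHred; auto. intro; apply Hdeep, in_remove_iff; auto.
  - exfalso. destruct Hin as [<-|[]]. apply Hdeep; simpl; auto.
  - rewrite in_app_iff in Hin. destruct Hin as [Hin|Hin].
    2:{ exfalso; apply Hdeep. rewrite in_app_iff. right. now apply ambs_top_deep. }
    rewrite in_app_iff in Hdeep. destruct HK as [HK1 HK2].
    assert (IH : fired_opener k (L ++ fn R) P P') by (apply IHred; auto; lia).
    assert (HkP : In k (fn P)) by (destruct IH as [? ? ? ? ? _ _ _ Hop]; eauto using opener_fn).
    pose proof (occ_count_all_pos k P HkP).
    apply fired_opener_par; auto. apply occ_count_all_zero. lia.
  - apply (fired_opener_scong k L P P' Q Q'); auto. apply IHred.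
    + now apply (amb_inert_scong _ _ _ H).
    + now rewrite <- (occ_count_scong _ _ _ _ H).
    + intro Hx. now apply Hdeep, (ambs_scong _ _ _ H).
    + now apply (ambs_scong _ _ _ H1).
Qed.

Lemma bs_bisim_sym P Q : bs_bisim P Q -> bs_bisim Q P.
Proof. intros [Rel [[Hsym Hsim] HR]]. exists Rel. split; [split|]; auto. Qed.

Lemma bs_bisim_barb P Q C n : bs_bisim P Q -> barb (fill C P) n -> barb (fill C Q) n.
Proof. intros [Rel [[Hsym Hsim] HR]]. apply (Hsim _ _ HR). Qed.

Lemma bs_bisim_red P Q C P' : bs_bisim P Q -> red (fill C P) P' ->
  exists Q', red (fill C Q) Q' /\ bs_bisim P' Q'.
Proof.
  intros [Rel [[Hsym Hsim] HR]] Hred.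
  destruct (proj2 (Hsim _ _ HR) C P' Hred) as [Q' [HQ' HR']].
  exists Q'. split; auto. exists Rel. split; [split|]; auto.
Qed.

Lemma scong_bs_bisim P Q : scong P Q -> bs_bisim P Q.
Proof.
  intro H. exists scong. repeat split; auto using sc_sym.
  - intros C n Hb. eapply barb_scong; [apply fill_scong|]; eauto.
  - intros C P' Hred. exists P'. split; [|apply sc_refl].
    eapply r_scong; [apply fill_scong, sc_sym| |apply sc_refl]; eauto.
Qed.

Lemma bs_bisim_trans P Q R : bs_bisim P Q -> bs_bisim Q R -> bs_bisim P R.
Proof.
  intros HPQ HQR. exists (fun X Z => exists Y, bs_bisim X Y /\ bs_bisim Y Z).
  split; eauto. split.
  - intros X Z [Y [HXY HYZ]]. eauto using bs_bisim_sym.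
  - intros X Z [Y [HXY HYZ]]. split; eauto using bs_bisim_barb.
    intros C X' Hred.
    destruct (bs_bisim_red _ _ _ _ HXY Hred) as [Y' [HY' HXY']].
    destruct (bs_bisim_red _ _ _ _ HYZ HY') as [Z' [HZ' HYZ']]. eauto.
Qed.

Lemma coopen_red P n T P' : trans_coopen P n T P' -> red (PPar P (PAct (COpen n) T)) P'.
Proof.
  intros [A [P1 [P2 [HP [HnA [HAT HP']]]]]].
  eapply r_scong with (P' := nus A (PPar (PPar (PAct (COpen n) T) (PAmb n P1)) P2));
    [| apply red_nus, r_par, r_open |].
  - eapply sc_trans; [apply sc_parl, HP|].
    eapply sc_trans; [apply scong_nus_par|apply scong_nus, scong_par_rotate].
    intros y Hy [->|HyT]; [tauto|eapply HAT; eauto].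
  - eapply sc_trans; [apply scong_nus, sc_parl, sc_par_comm|apply sc_sym, HP'].
Qed.

Lemma coopen_inert_amb A S k T : ~ In k A -> (forall a, In a A -> ~ In a (fn T)) ->
  trans_coopen (nus A (PPar S (PAmb k PNil))) k T (nus A (PPar S T)).
Proof.
  intros HkA HAT. exists A, PNil, S. repeat split; auto.
  - apply scong_nus, sc_par_comm.
  - apply scong_nus. eapply sc_trans; [apply sc_par_comm|].
    apply sc_parl. eapply sc_trans; [apply sc_sym, sc_par_nil|apply sc_par_comm].
Qed.

Definition sole_inert_amb (k : name) (X : proc) : Prop :=
  In k (ambs false X) /\ amb_inert k X /\ occ_count w_all k X <= 1.

Lemma bs_bisim_open_probe P0 Q n k P0' L :
  bs_bisim P0 Q -> red (PPar P0 (PAct (COpen n) (PAmb k PNil))) P0' ->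
  In k (ambs false P0') -> ~ In k (fn Q) -> n <> k ->
  exists X, bs_bisim P0' X /\ fired_opener k L (PPar Q (PAct (COpen n) (PAmb k PNil))) X.
Proof.
  intros HPQ Hred Hin HkQ Hnk.
  destruct (bs_bisim_red _ _ (CParL CHole _) _ HPQ Hred) as [X [HX HP0X]].
  exists X. split; auto. simpl in HX.
  apply red_exposing_top_amb; auto.
  - simpl. repeat split; auto using amb_inert_fresh.
  - simpl. rewrite occ_count_fresh, Nat.eqb_refl, (proj2 (Nat.eqb_neq n k) Hnk); auto.
  - simpl. rewrite app_nil_r. eauto using ambs_fn.
  - apply barb_top_amb, (bs_bisim_barb P0' X CHole); auto. now apply top_amb_barb.
Qed.

Lemma fired_open_probe k n L Q X :
  ~ In k (fn Q) -> fired_opener k L (PPar Q (PAct (COpen n) (PAmb k PNil))) X ->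
  exists A V W, (forall y, In y A -> ~ In y L) /\ ~ In n A /\
    scong Q (nus A (PPar (PAmb n V) W)) /\
    sole_inert_amb k X /\ scong (dissolve k X) (nus A (PPar V W)).
Proof.
  intros HkQ [m A V U R HAL HkA Hmk Hop HX HY HV HR HU Hin HK].
  assert (HkV : ~ In k (fn V)) by now apply occ_count_all_zero.
  assert (HkR : ~ In k (fn R)) by now apply occ_count_all_zero.
  assert (Hprobe : opener k (PPar Q (PAct (COpen n) (PAmb k PNil))) = Some (Some n)).
  { simpl. rewrite opener_fresh by auto. simpl. now destruct (Nat.eq_dec k k). }
  rewrite Hprobe in Hop.
  destruct (in_dec Nat.eq_dec m A) as [|HmA]; [discriminate|].
  injection Hop as <-.
  exists A, V, (PPar (dissolve k U) R). repeat split; auto.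
  - eapply sc_trans; [|eapply sc_trans; [apply HY|apply scong_nus, sc_par_assoc]].
    simpl. rewrite fire_opener_fresh, dissolve_fresh by auto.
    destruct (Nat.eq_dec k k); [|congruence]. simpl. rewrite Nat.eqb_refl.
    apply sc_sym, sc_par_nil.
  - apply (ambs_scong _ _ _ HX), ambs_nus. simpl. rewrite !in_app_iff. auto.
  - apply (amb_inert_scong _ _ _ HX), amb_inert_nus. simpl. auto using amb_inert_fresh.
  - rewrite (occ_count_scong _ _ _ _ HX), occ_count_nus by auto. simpl. lia.
  - eapply sc_trans; [apply dissolve_scong, HX|].
    rewrite dissolve_nus by auto. simpl. rewrite (dissolve_fresh k V), (dissolve_fresh k R) by auto.
    apply scong_nus, sc_par_assoc.
Qed.

Lemma bs_bisim_dissolve_probe P0 X k T P0' :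
  bs_bisim P0 X -> red (PPar P0 (PAct (COpen k) T)) P0' -> ~ In k (ambs false P0') ->
  sole_inert_amb k X -> ~ In k (fn T) -> bs_bisim P0' (PPar (dissolve k X) T).
Proof.
  intros HPX Hred Hout [Hin [HK HC]] HkT.
  destruct (bs_bisim_red _ _ (CParL CHole _) _ HPX Hred) as [W [HW HP0W]]. simpl in HW.
  assert (HoutW : ~ In k (ambs false W)).
  { intro Hx. apply Hout, barb_top_amb, (bs_bisim_barb W P0' CHole);
      auto using bs_bisim_sym, top_amb_barb. }
  pose proof (top_amb_occ_count k X Hin). pose proof (occ_count_all_split k X).
  assert (HT : forall w, occ_count w k T = 0) by auto using occ_count_fresh.
  destruct (red_removing_top_amb k _ _ HW) as [_ HWd]; simpl; rewrite ?HT, ?Nat.eqb_refl;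
    simpl; try lia; auto.
  - split; auto using amb_inert_fresh.
  - rewrite app_nil_r. auto.
  - apply (bs_bisim_trans _ _ _ HP0W), scong_bs_bisim.
    eapply sc_trans; [apply HWd|]. simpl. rewrite Nat.eqb_refl. apply sc_refl.
Qed.

Theorem mainTheorem5 :
  forall (P Q P' : proc) (n : name) (T1 : proc),
    bs_bisim P Q ->
    trans_coopen P n T1 P' ->
    exists Q', trans_coopen Q n T1 Q' /\ bs_bisim P' Q'.
Proof.
  intros P Q P' n T1 HPQ [A [P1 [P2 [HP [HnA [HAT HP']]]]]].
  set (k := fresh (fn P ++ fn Q ++ fn T1 ++ A ++ [n])).
  assert (Hk : ~ In k (fn P ++ fn Q ++ fn T1 ++ A ++ [n])) by apply fresh_not_in.
  clearbody k. rewrite !in_app_iff, (fn_scong _ _ HP), fn_nus in Hk. simpl in Hk.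
  rewrite in_app_iff in Hk.
  set (S := PPar P1 P2).
  assert (Hprobe1 : trans_coopen P n (PAmb k PNil) (nus A (PPar S (PAmb k PNil)))).
  { exists A, P1, P2. repeat split; auto.
    - simpl. intros a Ha [->|[]]; tauto.
    - apply scong_nus, scong_par_swap_r. }
  destruct (bs_bisim_open_probe _ _ _ _ _ (fn T1) HPQ (coopen_red _ _ _ _ Hprobe1))
    as [X [HX Hfired]]; [|tauto|intros ->; tauto|].
  { apply ambs_nus. simpl. rewrite in_app_iff. simpl. tauto. }
  destruct (fired_open_probe k n (fn T1) Q X ltac:(tauto) Hfired)
    as [A2 [V [W [HA2 [HnA2 [HQ [Hsole HdX]]]]]]].
  assert (HP'X : bs_bisim (nus A (PPar S T1)) (PPar (dissolve k X) T1)).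
  { apply (bs_bisim_dissolve_probe _ _ _ _ _ HX); [apply coopen_red, coopen_inert_amb; auto; tauto| |auto|tauto].
    intros [Hx HkA]%ambs_nus. apply ambs_fn in Hx. simpl in Hx.
    rewrite !in_app_iff in Hx. tauto. }
  exists (nus A2 (PPar (PPar V T1) W)). split.
  - exists A2, V, W. repeat split; auto using sc_refl.
  - apply (bs_bisim_trans _ (nus A (PPar S T1))).
    { apply scong_bs_bisim. eapply sc_trans; [apply HP'|apply scong_nus, scong_par_swap_r]. }
    apply (bs_bisim_trans _ _ _ HP'X), scong_bs_bisim.
    eapply sc_trans; [apply sc_parl, HdX|].
    eapply sc_trans; [apply scong_nus_par; auto|apply scong_nus, scong_par_swap_r].
Qed.
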